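(* Let $G:\mathbb{R}^{d_x}\to\mathbb{R}$ be $\mu_x$-strongly convex and $L_x$-smooth, $F:\mathbb{R}^{d_y}\to\mathbb{R}\cup\{+\infty\}$ proper closed convex with conjugate $F^\star$, $K:\mathbb{R}^{d_x}\to\mathbb{R}^{d_y}$ linear, and $(x^\star,y^\star)$ a solution of $\min_x\max_y\{G(x)+\langle y,Kx\rangle-F^\star(y)\}$. Choose any $\eta_x,\eta_y>0$ (and any $\beta_y>0$, $\theta\in[0,1]$). Then the iterates of APDA satisfy, for all $k\ge0$, $(1+\mu_x\eta_x)\frac{1}{\eta_x}\|x^{k+1}-x^\star\|^2\le\frac{1}{\eta_x}\|x^k-x^\star\|^2-\frac{1}{\eta_x}\|x^{k+1}-x^k\|^2-2\langle K^\top\bar y^k-K^\top y^\star,x^{k+1}-x^\star\rangle-\frac{1}{L_x}\|\nabla G(x^{k+1})-\nabla G(x^\star)\|^2.$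
   Context: $\mu_x$-strong convexity: $G(x')-G(x'')-\langle\nabla G(x''),x'-x''\rangle\ge\frac{\mu_x}{2}\|x'-x''\|^2$; $L_x$-smoothness: $\|\nabla G(x')-\nabla G(x'')\|\le L_x\|x'-x''\|$. A solution satisfies $\nabla G(x^\star)+K^\top y^\star=0$ and $0\in\partial F^\star(y^\star)-Kx^\star$. APDA: given $(x^0,y^0)$, $\bar y^0=y^0$, stepsizes $\eta_x,\eta_y,\beta_y>0$, $\theta\in[0,1]$, for $k=0,1,\dots$: $x^{k+1}$ satisfies $x^{k+1}=x^k-\eta_x(\nabla G(x^{k+1})+K^\top\bar y^k)$; $y^{k+1}=y^k-\eta_y(g^{k+1}-Kx^{k+1})-\eta_y\beta_yK(K^\top y^k+\nabla G(x^{k+1}))$ with $g^{k+1}\in\partial F^\star(y^{k+1})$ (a proximal step on $F^\star$); $\bar y^{k+1}=y^{k+1}+\theta(y^{k+1}-y^k)$. *)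

From HB Require Import structures.
From mathcomp Require Import all_boot all_order all_algebra.
From mathcomp Require Import all_classical all_reals all_analysis.
Set Implicit Arguments. Unset Strict Implicit. Unset Printing Implicit Defensive.
Import Order.TTheory GRing.Theory Num.Theory.
Import numFieldNormedType.Exports.
Local Open Scope ring_scope.
Local Open Scope classical_set_scope.

Definition dotv (R : realType) (n : nat) (u v : 'cV[R]_n) : R := (u^T *m v) 0 0.
Definition sqnorm (R : realType) (n : nat) (u : 'cV[R]_n) : R := dotv u u.
Definition enorm (R : realType) (n : nat) (u : 'cV[R]_n) : R := Num.sqrt (sqnorm u).

Definition is_gradient (R : realType) (n : nat) (G : 'cV[R]_n -> R)
  (gradG : 'cV[R]_n -> 'cV[R]_n) : Prop :=
  forall x v : 'cV[R]_n,
    is_derive (0 : R) (1 : R) (fun t : R => G (x + t *: v)) (dotv (gradG x) v).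

Definition strongly_convex (R : realType) (n : nat) (mu : R) (G : 'cV[R]_n -> R)
  (gradG : 'cV[R]_n -> 'cV[R]_n) : Prop :=
  forall x1 x2, G x1 - G x2 - dotv (gradG x2) (x1 - x2) >= mu / 2 * sqnorm (x1 - x2).

Definition smooth (R : realType) (n : nat) (L : R)
  (gradG : 'cV[R]_n -> 'cV[R]_n) : Prop :=
  forall x1 x2, enorm (gradG x1 - gradG x2) <= L * enorm (x1 - x2).

Definition proper_fun (R : realType) (n : nat) (F : 'cV[R]_n -> \bar R) : Prop :=
  (forall y, F y != -oo%E) /\ (exists y, F y != +oo%E).

(* closed = the epigraph is closed (equivalently F is lower semicontinuous) *)
Definition closed_fun (R : realType) (n : nat) (F : 'cV[R]_n -> \bar R) : Prop :=
  closed [set p : 'cV[R]_n * R | (F p.1 <= p.2%:E)%E].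

(* convex = the epigraph is convex *)
Definition convex_fun (R : realType) (n : nat) (F : 'cV[R]_n -> \bar R) : Prop :=
  forall (a b : 'cV[R]_n) (ra rb t : R), (F a <= ra%:E)%E -> (F b <= rb%:E)%E ->
    0 <= t <= 1 -> (F (t *: a + (1 - t) *: b)%R <= (t * ra + (1 - t) * rb)%R%:E)%E.

Definition fconj (R : realType) (n : nat) (F : 'cV[R]_n -> \bar R) (y : 'cV[R]_n)
  : \bar R := ereal_sup [set ((dotv y x)%:E - F x)%E | x in [set: 'cV[R]_n]].

Definition subgrad (R : realType) (n : nat) (f : 'cV[R]_n -> \bar R)
  (y g : 'cV[R]_n) : Prop :=
  f y \is a fin_num /\ forall z, (f y + (dotv g (z - y))%:E <= f z)%E.

(* The x-update is an implicit gradient step x^{k+1} = x^k - eta w with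
   w = gradG x^{k+1} + K^T ybar^k, and K^T ys = - gradG xs.  Expanding
   |x^k - xs|^2 around x^{k+1} therefore reduces the claim to
     mu |a - xs|^2 + 1/L |gradG a - gradG xs|^2 <= 2 <gradG a - gradG xs, a - xs>
   for a = x^{k+1}, which is the sum of the strong monotonicity and the
   cocoercivity of the gradient of a strongly convex L-smooth function; the
   latter follows from the descent lemma. *)

From HB Require Import structures.
From mathcomp Require Import all_boot all_order all_algebra.
From mathcomp Require Import all_classical all_reals all_analysis.
From mathcomp Require Import ring lra.
Import Order.TTheory GRing.Theory Num.Theory.
Import numFieldNormedType.Exports.
Local Open Scope classical_set_scope.
Local Open Scope ring_scope.

Section Euclidean.
Context {R : realType} {n : nat}.
Implicit Types (u v w : 'cV[R]_n) (a : R).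

Lemma dotvE u v : dotv u v = \sum_i u i 0 * v i 0.
Proof. by rewrite /dotv !mxE; apply: eq_bigr => i _; rewrite !mxE. Qed.

Lemma dotvC u v : dotv u v = dotv v u.
Proof. by rewrite !dotvE; apply: eq_bigr => i _; rewrite mulrC. Qed.

Lemma dotvDl u v w : dotv (u + v) w = dotv u w + dotv v w.
Proof. by rewrite !dotvE -big_split; apply: eq_bigr => i _; rewrite mxE mulrDl. Qed.

Lemma dotvZl a u v : dotv (a *: u) v = a * dotv u v.
Proof. by rewrite !dotvE mulr_sumr; apply: eq_bigr => i _; rewrite mxE mulrA. Qed.

Lemma dotvNl u v : dotv (- u) v = - dotv u v.
Proof. by rewrite -scaleN1r dotvZl mulN1r. Qed.

Lemma dotvBl u v w : dotv (u - v) w = dotv u w - dotv v w.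
Proof. by rewrite dotvDl dotvNl. Qed.

Lemma dotvDr u v w : dotv u (v + w) = dotv u v + dotv u w.
Proof. by rewrite dotvC dotvDl !(dotvC _ u). Qed.

Lemma dotvZr a u v : dotv u (a *: v) = a * dotv u v.
Proof. by rewrite dotvC dotvZl dotvC. Qed.

Lemma dotvNr u v : dotv u (- v) = - dotv u v.
Proof. by rewrite -scaleN1r dotvZr mulN1r. Qed.

Lemma sqnorm_ge0 u : 0 <= sqnorm u.
Proof. by rewrite /sqnorm dotvE; apply: sumr_ge0 => i _; rewrite -expr2 sqr_ge0. Qed.

Lemma sqr_enorm u : enorm u ^+ 2 = sqnorm u.
Proof. by rewrite /enorm sqr_sqrtr // sqnorm_ge0. Qed.

Lemma sqnormZ a u : sqnorm (a *: u) = a ^+ 2 * sqnorm u.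
Proof. by rewrite /sqnorm dotvZl dotvZr mulrA expr2. Qed.

Lemma sqnormN u : sqnorm (- u) = sqnorm u.
Proof. by rewrite -scaleN1r sqnormZ sqrrN expr1n mul1r. Qed.

Lemma sqnormDZ u v a :
  sqnorm (u + a *: v) = sqnorm u + 2 * a * dotv u v + a ^+ 2 * sqnorm v.
Proof.
by rewrite /sqnorm dotvDl !dotvDr !dotvZl !dotvZr (dotvC v u); ring.
Qed.

Lemma dotv_le_sqnorm {r} u v :
  0 < r -> sqnorm u <= r ^+ 2 * sqnorm v -> dotv u v <= r * sqnorm v.
Proof.
move=> r_gt0 huv; have := sqnorm_ge0 (u + (- r) *: v).
rewrite sqnormDZ sqrrN => h.
rewrite -(ler_pM2l r_gt0); nra.
Qed.

Lemma sqnorm_implicit_step {eta u v w} p : 0 < eta -> u = v - eta *: w ->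
  eta^-1 * sqnorm (v - p) - eta^-1 * sqnorm (u - v) - 2 * dotv w (u - p)
  = eta^-1 * sqnorm (u - p).
Proof.
move=> eta_gt0 ->.
have -> : v - p = v - eta *: w - p + eta *: w by rewrite addrAC subrK.
have -> : v - eta *: w - v = (- eta) *: w by rewrite addrAC subrr add0r scaleNr.
rewrite sqnormDZ sqnormZ sqrrN (dotvC _ w); field.
exact: lt0r_neq0.
Qed.

End Euclidean.

Section SmoothConvex.
Context {R : realType} {n : nat} {G : 'cV[R]_n -> R} {gradG : 'cV[R]_n -> 'cV[R]_n}.
Implicit Types (a b x v : 'cV[R]_n) (mu L : R).

Lemma is_derive_line x v (t : R) : is_gradient G gradG ->
  is_derive t 1 (fun s => G (x + s *: v)) (dotv (gradG (x + t *: v)) v).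
Proof.
move=> hg.
have -> : (fun s => G (x + s *: v)) = (fun s => G (x + t *: v + s *: v)) \o shift (- t).
  by apply/funext => s /=; rewrite scalerDl scaleNr addrACA subrr addr0.
rewrite -[dotv _ _]mulr1; apply: is_derive1_comp; last exact: is_derive_shift.
by rewrite /= subrr; exact: hg.
Qed.

Lemma smooth_sqnorm {L} a b : smooth L gradG ->
  sqnorm (gradG a - gradG b) <= L ^+ 2 * sqnorm (a - b).
Proof.
move=> hs; rewrite -!sqr_enorm -exprMn.
have hab := hs a b; have en_ge0 := sqrtr_ge0 (sqnorm (gradG a - gradG b)).
by rewrite lerXn2r // nnegrE // (le_trans en_ge0 hab).
Qed.

(* Apply the mean value theorem to [G (x + t v)] minus the claimed quadratic bound. *)
Lemma smooth_descent {L} x v : 0 < L -> is_gradient G gradG -> smooth L gradG ->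
  G (x + v) <= G x + dotv (gradG x) v + L / 2 * sqnorm v.
Proof.
move=> L_gt0 hg hs.
pose c1 := dotv (gradG x) v; pose c2 := L / 2 * sqnorm v.
pose h (t : R) := G (x + t *: v) - t * c1 - c2 * (t * t).
have dh (t : R) : is_derive t 1 h (dotv (gradG (x + t *: v)) v - c1 - c2 * (t + t)).
  have := is_derive_line x v t hg => ?; apply: is_derive_eq.
  by rewrite scaler0 add0r /GRing.scale /= !mulr1.
have hc : {within `[0, 1], continuous h}.
  by apply: derivable_within_continuous => t _; case: (dh t).
have [c] := MVT ltr01 (fun t _ => dh t) hc.
rewrite in_itv /= subr0 mulr1 => /andP[c_gt0 _] Eh.
have grad_inc : dotv (gradG (x + c *: v) - gradG x) v <= L * c * sqnorm v.
  apply: dotv_le_sqnorm; first exact: mulr_gt0.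
  have := smooth_sqnorm (x + c *: v) x hs.
  by rewrite addrAC subrr add0r sqnormZ exprMn mulrA.
rewrite dotvBl in grad_inc.
have : h 1 - h 0 <= 0 by rewrite Eh /c2 /c1; nra.
by rewrite /h scale1r scale0r addr0 /c1 /c2; lra.
Qed.

Lemma strongly_convexW {mu mu'} : mu' <= mu ->
  strongly_convex mu G gradG -> strongly_convex mu' G gradG.
Proof.
move=> le_mu hsc a b; apply: le_trans (hsc a b).
by rewrite ler_wpM2r ?sqnorm_ge0 // ler_pM2r.
Qed.

(* Descend from [a] along [- (gradG a - gradG b) / L] and compare with the
   convexity bound at [b]. *)
Lemma smooth_convex_lower_bound {L} a b :
  0 < L -> is_gradient G gradG -> strongly_convex 0 G gradG -> smooth L gradG ->
  G b + dotv (gradG b) (a - b) + (2 * L)^-1 * sqnorm (gradG a - gradG b) <= G a.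
Proof.
move=> L_gt0 hg hsc hs.
set d := gradG a - gradG b.
have descent := smooth_descent a (- L^-1 *: d) L_gt0 hg hs.
have convex := hsc (a + - L^-1 *: d) b.
rewrite !mul0r [a + _ - b]addrAC dotvDr dotvZr in convex.
rewrite dotvZr sqnormZ sqrrN in descent.
have Ed : L^-1 * dotv (gradG a) d - L^-1 * dotv (gradG b) d = L^-1 * sqnorm d.
  by rewrite -mulrBr -dotvBl.
have EL : L / 2 * (L^-1 ^+ 2 * sqnorm d) = (2 * L)^-1 * sqnorm d.
  by field; exact: lt0r_neq0.
have EL' : L^-1 * sqnorm d = 2 * ((2 * L)^-1 * sqnorm d).
  by field; exact: lt0r_neq0.
lra.
Qed.

Lemma strongly_convex_grad_monotone {mu} a b : strongly_convex mu G gradG ->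
  mu * sqnorm (a - b) <= dotv (gradG a - gradG b) (a - b).
Proof.
move=> hsc; have hab := hsc a b; have hba := hsc b a.
rewrite -opprB sqnormN dotvNr in hba; rewrite dotvBl; lra.
Qed.

Lemma smooth_convex_grad_cocoercive {L} a b :
  0 < L -> is_gradient G gradG -> strongly_convex 0 G gradG -> smooth L gradG ->
  L^-1 * sqnorm (gradG a - gradG b) <= dotv (gradG a - gradG b) (a - b).
Proof.
move=> L_gt0 hg hsc hs.
have hab := smooth_convex_lower_bound a b L_gt0 hg hsc hs.
have hba := smooth_convex_lower_bound b a L_gt0 hg hsc hs.
rewrite -(opprB a) -(opprB (gradG a)) sqnormN dotvNr in hba.
have EL : L^-1 = 2 * (2 * L)^-1 by field; exact: lt0r_neq0.
rewrite EL dotvBl; lra.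
Qed.

End SmoothConvex.

Theorem lemma6 (R : realType) (dx dy : nat)
  (G : 'cV[R]_dx -> R) (gradG : 'cV[R]_dx -> 'cV[R]_dx) (mux Lx : R)
  (F : 'cV[R]_dy -> \bar R) (K : 'M[R]_(dy, dx))
  (xs : 'cV[R]_dx) (ys : 'cV[R]_dy)
  (etax etay betay theta : R)
  (x : nat -> 'cV[R]_dx) (y ybar g : nat -> 'cV[R]_dy) :
  0 < mux -> 0 < Lx ->
  is_gradient G gradG -> strongly_convex mux G gradG -> smooth Lx gradG ->
  proper_fun F -> closed_fun F -> convex_fun F ->
  (* (xs, ys) is a saddle point / solution *)
  gradG xs + K^T *m ys = 0 ->
  subgrad (fconj F) ys (K *m xs) ->
  0 < etax -> 0 < etay -> 0 < betay -> 0 <= theta <= 1 ->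
  (* APDA iterates *)
  ybar 0%N = y 0%N ->
  (forall k : nat, x k.+1 = x k - etax *: (gradG (x k.+1) + K^T *m ybar k)) ->
  (forall k : nat, subgrad (fconj F) (y k.+1) (g k.+1)) ->
  (forall k : nat, y k.+1 = y k - etay *: (g k.+1 - K *m x k.+1)
                        - (etay * betay) *: (K *m (K^T *m y k + gradG (x k.+1)))) ->
  (forall k : nat, ybar k.+1 = y k.+1 + theta *: (y k.+1 - y k)) ->
  forall k : nat,
    (1 + mux * etax) * (1 / etax) * sqnorm (x k.+1 - xs)
    <= (1 / etax) * sqnorm (x k - xs) - (1 / etax) * sqnorm (x k.+1 - x k)
       - 2 * dotv (K^T *m ybar k - K^T *m ys) (x k.+1 - xs)
       - (1 / Lx) * sqnorm (gradG (x k.+1) - gradG xs).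
Proof.
move=> mux_gt0 Lx_gt0 hg hsc hs _ _ _ saddle _ etax_gt0 _ _ _ _ step_x _ _ _ k.
have Kys : K^T *m ys = - gradG xs by apply/eqP; rewrite -addr_eq0 addrC saddle.
set a := x k.+1; set w := gradG a + K^T *m ybar k; set d := gradG a - gradG xs.
have -> : K^T *m ybar k - K^T *m ys = w - d.
  by rewrite Kys opprK /w /d opprB addrA addrAC (addrC (gradG a)) addrK.
have step := sqnorm_implicit_step xs etax_gt0 (step_x k).
have mono := strongly_convex_grad_monotone a xs hsc.
have convex := strongly_convexW (ltW mux_gt0) hsc.
have coco := smooth_convex_grad_cocoercive a xs Lx_gt0 hg convex hs.
have -> : (1 + mux * etax) * (1 / etax) = etax^-1 + mux.
  by field; exact: lt0r_neq0.
rewrite !div1r dotvBl; rewrite -/a -/d in step mono coco; lra.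
Qed.
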